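(* Let $n\in\mathbb{Z}$ and let $A$ be a $3\times 3$ matrix with integer entries. Then $A$ is a Cappell–Shaneson matrix with trace $n$ if and only if $f_n(A)=O$, where $f_n(x)=x^3-nx^2+(n-1)x-1$ and $O$ is the $3\times 3$ zero matrix.
   Context: A Cappell–Shaneson (CS) matrix is a matrix $A\in SL(3;\mathbb{Z})$ with $\det(A-I)=1$. The polynomial $f_n(x)=x^3-nx^2+(n-1)x-1$ is irreducible over $\mathbb{Q}$ for every integer $n$; this is a known fact that may be used. *)

From mathcomp Require Import all_boot all_order all_algebra.
Set Implicit Arguments. Unset Strict Implicit. Unset Printing Implicit Defensive.
Import GRing.Theory Num.Theory.
Local Open Scope ring_scope.

Definition CS_matrix (A : 'M[int]_3) : Prop :=
  \det A = 1 /\ \det (A - 1%:M) = 1.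

Definition f_poly (n : int) : {poly int} :=
  'X^3 - n%:P * 'X^2 + (n - 1)%:P * 'X - 1.

(* The characteristic polynomial of a 3 x 3 matrix is
   X^3 - (tr A) X^2 + c X - det A, and evaluating it at 1 gives
   c = tr A + det A - 1 - det (A - 1); hence A is a Cappell-Shaneson matrix of
   trace n exactly when char_poly A = f_n, and Cayley-Hamilton gives one
   direction.  Conversely, f_n is irreducible over Q (a rational root of a
   monic integer polynomial is an integer, and f_n has no integer root since
   such a root would divide 1), so an integer matrix annihilated by f_n has
   f_n as minimal, hence as characteristic, polynomial. *)

From mathcomp Require Import all_boot all_order all_algebra algC algnum.
From mathcomp Require Import ring zify.

Set Implicit Arguments.
Unset Strict Implicit.
Unset Printing Implicit Defensive.
Import GRing.Theory Num.Theory.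
Local Open Scope ring_scope.

Lemma rat_root_monic_int (p : {poly int}) (x : rat) :
  p \is monic -> root (map_poly intr p) x -> x \is a Num.int.
Proof.
move=> mon_p px0; rewrite -Cint_rat; apply: Cint_rat_Aint; first exact: Crat_rat.
have pZtoQtoC : map_poly ratr (map_poly intr p) = map_poly (intr : int -> algC) p.
  by rewrite -map_poly_comp; apply: eq_map_poly => a /=; rewrite rmorph_int.
apply: (root_monic_Aint (p := map_poly intr p)).
- by rewrite -pZtoQtoC fmorph_root.
- exact: monic_map.
- by apply/polyOverP => i; rewrite coef_map intr_int.
Qed.

Lemma horner_f_poly (n k : int) :
  (f_poly n).[k] = k ^+ 3 - n * k ^+ 2 + (n - 1) * k - 1.
Proof. by rewrite /f_poly !hornerE. Qed.

Lemma f_poly_no_int_root (n k : int) : ~~ root (f_poly n) k.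
Proof.
rewrite /root horner_f_poly; apply/negP => /eqP fk0.
have k_unit : (k %| 1)%Z.
  apply/dvdzP; exists (k ^+ 2 - n * k + n - 1).
  by apply/eqP; rewrite eq_sym -subr_eq0 -fk0; apply/eqP; ring.
have k_pm1 : k = 1 \/ k = -1 by move: k_unit; rewrite dvdz1; lia.
by case: k_pm1 fk0 => ->; rewrite ?expr1n; lia.
Qed.

Lemma coef3_f_poly n : (f_poly n)`_3 = 1.
Proof. rewrite /f_poly !coefE /=; ring. Qed.

Lemma size_f_poly n : size (f_poly n) = 4%N.
Proof.
apply/eqP; rewrite eqn_leq; apply/andP; split.
  apply/leq_sizeP => j hj; rewrite /f_poly !coefE.
  by case: j hj => [|[|[|[|j]]]] //= _; ring.
by rewrite ltnNge; apply/negP => /leq_sizeP/(_ 3%N (leqnn _)); rewrite coef3_f_poly.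
Qed.

Lemma f_poly_monic n : f_poly n \is monic.
Proof. by rewrite monicE /lead_coef size_f_poly coef3_f_poly. Qed.

Lemma f_poly_irreducible n : irreducible_poly (f_poly n).
Proof.
apply/irreducible_rat_int/cubic_irreducible.
  by rewrite size_rat_int_poly size_f_poly.
move=> x; apply/negP => fx0.
have /numqK xE := rat_root_monic_int (f_poly_monic n) fx0.
move: fx0; rewrite -xE /root horner_map intr_eq0.
exact/negP/f_poly_no_int_root.
Qed.

Lemma horner_char_poly (R : comNzRingType) m (A : 'M[R]_m) x :
  (char_poly A).[x] = \det (x%:M - A).
Proof.
rewrite -horner_evalE /char_poly -det_map_mx; congr (\det _).
by apply/matrixP => i j; rewrite !mxE /= horner_evalE !hornerE hornerMn hornerX.
Qed.

Lemma char_poly3 (R : comNzRingType) (A : 'M[R]_3) :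
  char_poly A = 'X^3 - (\tr A)%:P * 'X^2
    + (\tr A + \det A - 1 - \det (A - 1%:M))%:P * 'X - (\det A)%:P.
Proof.
have p3 : (char_poly A)`_3 = 1.
  by have /monicP := char_poly_monic A; rewrite /lead_coef size_char_poly.
have p2 : (char_poly A)`_2 = - \tr A := char_poly_trace A isT.
have p0 : (char_poly A)`_0 = - \det A by rewrite char_poly_det; ring.
have p1 : (char_poly A)`_1 = - \det (A - 1%:M) - (char_poly A)`_0
                            - (char_poly A)`_2 - (char_poly A)`_3.
  have -> : - \det (A - 1%:M) = (char_poly A).[1].
    by rewrite horner_char_poly -opprB -scaleN1r detZ; ring.
  by rewrite horner_coef size_char_poly !big_ord_recl big_ord0 /= !expr1n; ring.
apply/polyP => i; rewrite ![in RHS]coefE.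
case: i => [|[|[|[|i]]]] /=; rewrite ?p1 ?p0 ?p2 ?p3; try ring.
by rewrite nth_default ?size_char_poly //; ring.
Qed.

Lemma char_poly_eq_f_poly (n : int) (A : 'M[int]_3) :
  char_poly A = f_poly n <-> CS_matrix A /\ \tr A = n.
Proof.
rewrite char_poly3 /CS_matrix /f_poly; split=> [/polyP cfE | [[-> ->] ->]].
  move: (cfE 0%N) (cfE 1%N) (cfE 2%N); rewrite !coefE /= !(mulr0, mulr1, subr0, sub0r, addr0, add0r).
  move=> /oppr_inj detA /[swap] /oppr_inj trA; rewrite detA trA => c1.
  by do !split=> //; apply/oppr_inj/(addrI (n + 1 - 1)); rewrite c1; ring.
by rewrite polyC1 (_ : n + 1 - 1 - 1 = n - 1) //; ring.
Qed.

Lemma char_poly_irreducible_annihilator (F : fieldType) m (B : 'M[F]_m.+1) p :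
  p \is monic -> irreducible_poly p -> size p = m.+2 ->
  horner_mx B p = 0 -> char_poly B = p.
Proof.
move=> mon_p irr_p sz_p Bp0.
have minB : mxminpoly B = p.
  have sz_min : size (mxminpoly B) != 1%N.
    by rewrite size_mxminpoly eqSS -lt0n mxminpoly_nonconstant.
  apply/eqP; rewrite -eqp_monic ?mxminpoly_monic //.
  exact: irr_p.2 _ sz_min (mxminpoly_min Bp0).
have := mxminpoly_dvd_char B; rewrite minB => p_dvd_ch.
apply/eqP; rewrite -eqp_monic ?char_poly_monic // eqp_sym -dvdp_size_eqp //.
by rewrite size_char_poly sz_p.
Qed.

Lemma char_poly_int_irreducible_annihilator m (A : 'M[int]_m.+1) p :
  p \is monic -> irreducible_poly p -> size p = m.+2 ->
  horner_mx A p = 0 -> char_poly A = p.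
Proof.
move=> mon_p irr_p sz_p Ap0.
apply: (map_inj_poly (@intr_inj rat) (rmorph0 _)); rewrite map_char_poly.
apply: char_poly_irreducible_annihilator.
- exact: monic_map.
- exact/irreducible_rat_int.
- by rewrite size_rat_int_poly.
- by rewrite -map_horner_mx Ap0 map_mx0.
Qed.

Theorem mainTheorem1 (n : int) (A : 'M[int]_3) :
  (CS_matrix A /\ \tr A = n) <-> horner_mx A (f_poly n) = 0.
Proof.
split=> [/char_poly_eq_f_poly <- | fA0]; first exact: Cayley_Hamilton.
apply/char_poly_eq_f_poly/char_poly_int_irreducible_annihilator => //.
- exact: f_poly_monic.
- exact: f_poly_irreducible.
- exact: size_f_poly.
Qed.
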